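(* For all positive integers $n\geq 2$ and $t$, $|D_{n,t}|=\left\lceil\frac{n^t}{n+1}\right\rceil$.
   Context: For a positive integer $n$ let $[n]=\{1,\dots,n\}$; vertices of the Sierpiński graph $S(K_n,t)$ are words in $[n]^t$. Write $a^k$ for the word consisting of $k$ copies of the letter $a$. The sets $D_{n,t}\subseteq[n]^t$ are defined recursively: $D_{n,1}=\{1\}$, $D_{n,2}=\{11,21,\dots,n1\}$. For $t\geq 3$ and $\mathbf v=v_1\cdots v_{t-2}\in D_{n,t-2}$ put $E_1(\mathbf v)=\{v_1\cdots v_{t-2}\alpha\alpha:\alpha\in[n]\}$, $E_2(\mathbf v)=\{v_1\cdots v_{t-3}\alpha\beta v_{t-2}:\alpha,\beta\in[n]\setminus\{v_{t-2}\}\}$, and, if $\mathbf v$ is not a constant word, let $\ell$ be the largest index in $[t-3]$ with $v_\ell\neq v_{\ell+1}$ and put $E_3(\mathbf v)=\{v_1\cdots v_{\ell-1}v_{\ell+1}v_\ell^{\,t-\ell-2}\alpha v_\ell:\alpha\in[n]\setminus\{v_\ell\}\}$. If $t\geq 3$ is odd, $D_{n,t}=E_1(1^{t-2})\cup E_2(1^{t-2})\cup\bigcup_{\mathbf v\in D_{n,t-2}\setminus\{1^{t-2}\}}\big(E_1(\mathbf v)\cup E_2(\mathbf v)\cup E_3(\mathbf v)\big)$. If $t\geq 4$ is even, $D_{n,t}=\{1^{t-2}\alpha1:\alpha\in[n]\}\cup\bigcup_{\mathbf v\in D_{n,t-2}\setminus\{1^{t-2}\}}\big(E_1(\mathbf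 v)\cup E_2(\mathbf v)\cup E_3(\mathbf v)\big)$. (In this recursion $1^{t-2}\in D_{n,t-2}$ is the only constant word in $D_{n,t-2}$, so $E_3$ is applied only to non-constant words.) *)

From mathcomp Require Import all_boot.
Set Implicit Arguments. Unset Strict Implicit. Unset Printing Implicit Defensive.

(* Words over [n] = {1,...,n} are represented as sequences of naturals
   (letters 1..n); v_i (1-indexed) is nth 0 v (i-1). *)

Definition letters (n : nat) : seq nat := iota 1 n.
Definition letters_except (n x : nat) : seq nat := [seq a <- letters n | a != x].

Definition E1 (n : nat) (v : seq nat) : seq (seq nat) :=
  [seq v ++ [:: a; a] | a <- letters n].

Definition E2 (n : nat) (v : seq nat) : seq (seq nat) :=
  let k := size v in
  let lst := nth 0 v (k - 1) in
  [seq take (k - 1) v ++ [:: a; b; lst]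
   | a <- letters_except n lst, b <- letters_except n lst].

Definition ell (v : seq nat) : nat :=
  last 0 [seq i <- iota 1 (size v - 1) | nth 0 v (i - 1) != nth 0 v i].

(* E_3(v) = { v_1..v_{l-1} v_{l+1} v_l^{t-l-2} alpha v_l : alpha <> v_l },
   where t = size v + 2 *)
Definition E3 (n : nat) (v : seq nat) : seq (seq nat) :=
  let l := ell v in
  let vl := nth 0 v (l - 1) in
  let vl1 := nth 0 v l in
  [seq take (l - 1) v ++ [:: vl1] ++ nseq (size v - l) vl ++ [:: a; vl]
   | a <- letters_except n vl].

(* D n t : a list of words enumerating D_{n,t} (possibly with repetitions;
   the set D_{n,t} is the set of its elements).  D n 0 is unused. *)
Fixpoint D (n t : nat) {struct t} : seq (seq nat) :=
  match t with
  | 0 => [::]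
  | 1 => [:: [:: 1]]
  | 2 => [seq [:: a; 1] | a <- letters n]
  | S (S (S s as u)) =>
      let prev := D n u in
      let c := nseq u 1 in
      let rest := flatten [seq E1 n v ++ E2 n v ++ E3 n v
                           | v <- prev & v != c] in
      if odd t then E1 n c ++ E2 n c ++ rest
      else [seq c ++ [:: a; 1] | a <- letters n] ++ rest
  end.

Definition cardD (n t : nat) : nat := size (undup (D n t)).

From mathcomp Require Import all_boot zify.
Set Implicit Arguments. Unset Strict Implicit.

(* The heart of the proof is a parent map that inverts the three constructions:
   the last three letters of a child decide which E_i produced it (its kind) and
   determine v; for E3 this rests on the twist v_1..v_(l-1) v_(l+1) v_l^(k-l)
   (l = ell v) being an involution on non-constant words.  Consequently a
   non-constant word has n + (n-1)^2 + (n-1) = n^2 pairwise distinct children,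
   children of distinct parents are distinct, and no head word is a child.
   By two-step induction on t, D n t is duplicate-free, consists of 1^t and
   non-constant words of length t over [n], and (n+1) |D_(n,t)| = n^t + e with
   e = 1 for odd t and e = n for even t; the closed form follows by division. *)

Definition nonconst (w : seq nat) : Prop :=
  exists2 i, 0 < i < size w & nth 0 w (i - 1) != nth 0 w i.

Lemma nonconst_at w i : i.+1 < size w -> nth 0 w i != nth 0 w i.+1 -> nonconst w.
Proof. by move=> iw ne; exists i.+1; rewrite ?subn1 //; lia. Qed.

Lemma nonconst_cat v s : nonconst v -> nonconst (v ++ s).
Proof.
case=> i /andP[i0 iv] ne; exists i; first by rewrite size_cat; lia.
by rewrite !nth_cat iv; have -> : i - 1 < size v by lia.
Qed.

Lemma nth_cat_pair (u : seq nat) x y :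
  nth 0 (u ++ [:: x; y]) (size u) = x /\ nth 0 (u ++ [:: x; y]) (size u).+1 = y.
Proof. by rewrite !nth_cat ltnn ltnNge leqnSn subnn subSnn. Qed.

(* [mem_nth] for words, with the bound stated on [seq nat] so that it is
   amenable to arithmetic decision procedures. *)
Lemma mem_nth_word (v : seq nat) i : i < size v -> nth 0 v i \in v.
Proof. exact: mem_nth. Qed.

Lemma ell_spec v l : 0 < l < size v -> nth 0 v (l - 1) != nth 0 v l ->
  (forall i, l < i < size v -> nth 0 v (i - 1) = nth 0 v i) -> ell v = l.
Proof.
move=> /andP[l0 lv] ne after; rewrite /ell.
have -> : size v - 1 = (l - 1) + (1 + (size v - 1 - l)) by lia.
rewrite iotaD iotaD filter_cat filter_cat.
have -> : 1 + (l - 1) = l by lia.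
have -> : [seq i <- iota (l + 1) (size v - 1 - l) | nth 0 v (i - 1) != nth 0 v i] = [::].
  rewrite (@eq_in_filter _ _ pred0) ?filter_pred0 // => i; rewrite mem_iota => il /=.
  by rewrite after ?eqxx //; lia.
by rewrite /= ne cats0 last_cat.
Qed.

Lemma ellP v : nonconst v -> [/\ 0 < ell v < size v, nth 0 v (ell v - 1) != nth 0 v (ell v)
   & forall i, ell v < i < size v -> nth 0 v (i - 1) = nth 0 v i].
Proof.
move=> ncv.
pose P i := (0 < i < size v) && (nth 0 v (i - 1) != nth 0 v i).
have exP : exists i, P i by case: ncv => i iv ne; exists i; rewrite /P iv ne.
have boundP i : P i -> i <= size v by case/andP=> /andP[_ /ltnW].
case: (ex_maxnP exP boundP) => l /andP[lv ne] maxl.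
have after i : l < i < size v -> nth 0 v (i - 1) = nth 0 v i.
  move=> /andP[li iv]; apply/eqP; apply/negPn/negP => ne'.
  have /maxl : P i by rewrite /P ne' iv andbT; lia.
  lia.
by rewrite (ell_spec lv ne after).
Qed.

Lemma ell_const_tail v i : nonconst v -> ell v <= i < size v -> nth 0 v i = nth 0 v (ell v).
Proof.
move=> ncv; case: (ellP ncv) => [/andP[l0 _] _ after].
elim: i => [|i IH] /andP[li iv]; first by have -> : ell v = 0 by lia.
case: (leqP (ell v) i) => h; last by have -> : ell v = i.+1 by lia.
by rewrite -IH -?(after i.+1) ?subn1 //; lia.
Qed.

Lemma ell_nseq m x : ell (nseq m x) = 0.
Proof.
rewrite /ell (@eq_in_filter _ _ pred0) ?filter_pred0 // => i.
rewrite mem_iota size_nseq => iv /=.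
have [i1m im] : i - 1 < m /\ i < m by lia.
by rewrite !nth_nseq i1m im eqxx.
Qed.

Definition twist (v : seq nat) : seq nat :=
  take (ell v - 1) v ++ [:: nth 0 v (ell v)] ++ nseq (size v - ell v) (nth 0 v (ell v - 1)).

Lemma E3E n v : E3 n v = [seq twist v ++ [:: a; nth 0 v (ell v - 1)]
   | a <- letters_except n (nth 0 v (ell v - 1))].
Proof. by apply: eq_map => a; rewrite /twist -!catA. Qed.

Lemma size_twist v : nonconst v -> size (twist v) = size v.
Proof.
move/ellP=> [/andP[l0 lv] _ _].
by rewrite /twist !size_cat size_take /= size_nseq; case: ifP; lia.
Qed.

(* On the constant word the twist degenerates and lengthens the word. *)
Lemma size_twist_nseq m x : size (twist (nseq m x)) = m.+1.
Proof. by rewrite /twist ell_nseq !size_cat /= sub0n take0 !size_nseq subn0. Qed.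

Lemma nth_twist v i : nonconst v -> i < size v ->
  nth 0 (twist v) i = if i < ell v - 1 then nth 0 v i
     else if i == ell v - 1 then nth 0 v (ell v) else nth 0 v (ell v - 1).
Proof.
move=> /ellP[/andP[l0 lv] _ _] iv.
rewrite /twist nth_cat size_take; have -> : ell v - 1 < size v by lia.
case: ifP => i_lt; first by rewrite nth_take.
case: ifP => [/eqP -> | i_ne]; first by rewrite subnn.
have -> : i - (ell v - 1) = (i - ell v).+1 by lia.
by rewrite /= nth_nseq; have -> : i - ell v < size v - ell v by lia.
Qed.

Lemma twist_ell v : nonconst v -> nonconst (twist v) /\ ell (twist v) = ell v.
Proof.
move=> ncv; case: (ellP ncv) => [/andP[l0 lv] ne _].
have sz := size_twist ncv.
have tw_l1 : nth 0 (twist v) (ell v - 1) = nth 0 v (ell v).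
  by rewrite nth_twist ?ltnn ?eqxx //; lia.
have tw_l : nth 0 (twist v) (ell v) = nth 0 v (ell v - 1).
  rewrite nth_twist //; have -> : (ell v < ell v - 1) = false by lia.
  by have -> : (ell v == ell v - 1) = false by lia.
have ne' : nth 0 (twist v) (ell v - 1) != nth 0 (twist v) (ell v) by rewrite tw_l1 tw_l eq_sym.
have lv' : 0 < ell v < size (twist v) by rewrite sz l0.
have after i : ell v < i < size (twist v) -> nth 0 (twist v) (i - 1) = nth 0 (twist v) i.
  rewrite sz => iv; rewrite !nth_twist //; try lia.
  have -> : (i - 1 < ell v - 1) = false by lia.
  have -> : (i < ell v - 1) = false by lia.
  have -> : (i - 1 == ell v - 1) = false by lia.
  by have -> : (i == ell v - 1) = false by lia.
by split; [exists (ell v) | exact: ell_spec].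
Qed.

Lemma twistK v : nonconst v -> twist (twist v) = v.
Proof.
move=> ncv; case: (twist_ell ncv) => nct El; case: (ellP ncv) => [/andP[l0 lv] _ _].
have sz := size_twist ncv.
apply: (@eq_from_nth _ 0) => [|i]; first by rewrite size_twist // sz.
rewrite size_twist // sz => iv; rewrite nth_twist ?sz // El.
case: ifP => i_lt; first by rewrite nth_twist // i_lt.
case: ifP => [/eqP -> | i_ne].
  rewrite nth_twist //; have -> : (ell v < ell v - 1) = false by lia.
  by have -> : (ell v == ell v - 1) = false by lia.
rewrite nth_twist ?ltnn ?eqxx //; last lia.
by rewrite (@ell_const_tail v i ncv) //; lia.
Qed.

Lemma last_twist v : nonconst v -> nth 0 (twist v) (size v - 1) = nth 0 v (ell v - 1).
Proof.
move=> ncv; case: (ellP ncv) => [/andP[l0 lv] _ _].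
rewrite nth_twist //; last lia.
have -> : (size v - 1 < ell v - 1) = false by lia.
by have -> : (size v - 1 == ell v - 1) = false by lia.
Qed.

Lemma twist_sub v : nonconst v -> {subset twist v <= v}.
Proof.
move=> /ellP[/andP[_ lv] _ _] x.
rewrite /twist !mem_cat => /orP[/mem_take // | /orP[]].
  by rewrite inE => /eqP ->; apply: mem_nth_word.
by rewrite mem_nseq => /andP[_ /eqP ->]; apply: mem_nth_word; lia.
Qed.

(* Reading the last three letters of a word w = w_1..w_(k+2) tells which of the
   constructions E1, E2, E3 produced it (its kind) and recovers the word it came from. *)
Definition kind (w : seq nat) : nat :=
  let k := (size w).-2 in
  if nth 0 w k == nth 0 w k.+1 then 0
  else if nth 0 w (k - 1) != nth 0 w k.+1 then 1 else 2.

Definition parent (w : seq nat) : seq nat :=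
  let k := (size w).-2 in
  if nth 0 w k == nth 0 w k.+1 then take k w
  else if nth 0 w (k - 1) != nth 0 w k.+1 then rcons (take (k - 1) w) (nth 0 w k.+1)
  else twist (take k w).

Lemma kind_cat_pair (u : seq nat) x y : 0 < size u ->
  kind (u ++ [:: x; y]) = if x == y then 0 else if nth 0 u (size u - 1) != y then 1 else 2.
Proof.
move=> u0; have [w_k w_k1] := nth_cat_pair u x y.
have w_km1 : nth 0 (u ++ [:: x; y]) (size u - 1) = nth 0 u (size u - 1).
  by rewrite nth_cat ltn_subrL u0.
by rewrite /kind size_cat addn2 w_k w_k1 w_km1.
Qed.

Lemma parent_cat_pair (u : seq nat) x y : 0 < size u ->
  parent (u ++ [:: x; y]) = if x == y then u
    else if nth 0 u (size u - 1) != y then rcons (take (size u - 1) u) y else twist u.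
Proof.
move=> u0; have [w_k w_k1] := nth_cat_pair u x y.
have w_km1 : nth 0 (u ++ [:: x; y]) (size u - 1) = nth 0 u (size u - 1).
  by rewrite nth_cat ltn_subrL u0.
rewrite /parent size_cat addn2 w_k w_k1 w_km1 take_size_cat //.
by rewrite takel_cat // leq_subr.
Qed.

Lemma parent_E1 (v : seq nat) a : 0 < size v ->
  parent (v ++ [:: a; a]) = v /\ kind (v ++ [:: a; a]) = 0.
Proof. by move=> v0; rewrite parent_cat_pair // kind_cat_pair // eqxx. Qed.

Lemma parent_E2 (v : seq nat) a b : 0 < size v ->
  a != nth 0 v (size v - 1) -> b != nth 0 v (size v - 1) ->
  let w := take (size v - 1) v ++ [:: a; b; nth 0 v (size v - 1)] in
  parent w = v /\ kind w = 1.
Proof.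
move=> v0 ha hb /=; set x := nth 0 v (size v - 1); set u := rcons (take (size v - 1) v) a.
have st : size (take (size v - 1) v) = size v - 1 by rewrite size_take ltn_subrL v0.
have u_last : nth 0 u (size v - 1) = a by rewrite nth_rcons st ltnn eqxx.
have -> : take (size v - 1) v ++ [:: a; b; x] = u ++ [:: b; x] by rewrite cat_rcons.
have su : size u = size v by rewrite size_rcons st subn1 prednK.
rewrite parent_cat_pair ?kind_cat_pair ?su // (negbTE hb) u_last ha; split=> //.
rewrite /u -[rcons _ a]cats1 take_size_cat // /x -take_nth ?ltn_subrL ?v0 //.
by rewrite subn1 prednK // take_size.
Qed.

Lemma parent_E3 v a : nonconst v -> a != nth 0 v (ell v - 1) ->
  let w := twist v ++ [:: a; nth 0 v (ell v - 1)] in parent w = v /\ kind w = 2.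
Proof.
move=> ncv ha /=; have [/andP[l0 lv] _ _] := ellP ncv.
have st := size_twist ncv; have tw0 : 0 < size (twist v) by rewrite st; lia.
rewrite parent_cat_pair ?kind_cat_pair // (negbTE ha) st last_twist // eqxx /=.
by rewrite twistK.
Qed.

Lemma mem_letters n x : (x \in letters n) = (0 < x <= n).
Proof. by rewrite /letters mem_iota add1n ltnS. Qed.

Lemma mem_letters_except n x a : (a \in letters_except n x) = (a \in letters n) && (a != x).
Proof. by rewrite /letters_except mem_filter andbC. Qed.

Lemma uniq_letters n : uniq (letters n).
Proof. exact: iota_uniq. Qed.

Lemma uniq_letters_except n x : uniq (letters_except n x).
Proof. exact: filter_uniq (uniq_letters n). Qed.

Lemma size_letters_except n x : x \in letters n -> size (letters_except n x) = n - 1.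
Proof.
move=> xn; rewrite size_filter.
have := count_predC (pred1 x) (letters n).
rewrite (count_uniq_mem _ (uniq_letters n)) xn size_iota.
have -> : count (predC (pred1 x)) (letters n) = count (fun a => a != x) (letters n) by [].
lia.
Qed.

Definition grown n (v w : seq nat) (k : nat) : Prop :=
  [/\ size w = (size v).+2, {subset w <= letters n}, parent w = v & kind w = k].

Lemma E1_grown n (v w : seq nat) : 0 < size v -> {subset v <= letters n} -> w \in E1 n v ->
  grown n v w 0.
Proof.
move=> v0 vn /mapP[a an ->]; have [pa ki] := parent_E1 a v0; split => //.
- by rewrite size_cat addn2.
- by move=> z; rewrite mem_cat !inE => /orP[/vn // | /orP[] /eqP ->].
Qed.

Lemma E2_grown n (v w : seq nat) : 0 < size v -> {subset v <= letters n} -> w \in E2 n v ->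
  grown n v w 1 /\ nonconst w.
Proof.
move=> v0 vn /allpairsP[[a b] /= [ha hb ->]].
move: ha hb; rewrite !mem_letters_except => /andP[an ha] /andP[bn hb].
have [pa ki] := parent_E2 v0 ha hb; set x := nth 0 v (size v - 1).
have st : size (take (size v - 1) v) = size v - 1 by rewrite size_take; case: ifP; lia.
have xv : x \in v by apply: mem_nth_word; lia.
split; first split => //.
- by rewrite size_cat st /=; lia.
- move=> z; rewrite mem_cat !inE => /orP[/mem_take /vn // | ].
  by case/or3P => /eqP ->; rewrite ?an ?bn ?vn.
- apply: (@nonconst_at _ (size v)); first by rewrite size_cat st /=; lia.
  rewrite !nth_cat st; have -> : (size v < size v - 1) = false by lia.
  have -> : ((size v).+1 < size v - 1) = false by lia.
  have -> : size v - (size v - 1) = 1 by lia.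
  by have -> : (size v).+1 - (size v - 1) = 2 by lia.
Qed.

Lemma E3_grown n (v w : seq nat) : nonconst v -> {subset v <= letters n} -> w \in E3 n v ->
  grown n v w 2 /\ nonconst w.
Proof.
move=> ncv vn; rewrite E3E => /mapP[a ha ->].
move: ha; rewrite mem_letters_except => /andP[an ha].
have [pa ki] := parent_E3 ncv ha; have st := size_twist ncv.
have yv : nth 0 v (ell v - 1) \in v by case: (ellP ncv) => [/andP[_ lv] _ _]; apply: mem_nth_word; lia.
split; first split => //.
- by rewrite size_cat st addn2.
- move=> z; rewrite mem_cat !inE => /orP[/(twist_sub ncv) /vn // | /orP[] /eqP ->] //.
  exact: vn.
- apply: (@nonconst_at _ (size v)); first by rewrite size_cat st addn2.
  by have [] := nth_cat_pair (twist v) a (nth 0 v (ell v - 1)); rewrite st => -> ->.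
Qed.

Lemma uniq_E1 n v : uniq (E1 n v).
Proof.
rewrite map_inj_uniq ?uniq_letters // => a b.
by move/(congr1 (nth 0^~ (size v))); rewrite !(nth_cat_pair v _ _).1.
Qed.

Lemma uniq_E2 n (v : seq nat) : 0 < size v -> uniq (E2 n v).
Proof.
move=> v0; apply: allpairs_uniq; try exact: uniq_letters_except.
move=> [a b] [a' b'] _ _ /= e.
have st : size (take (size v - 1) v) = size v - 1 by rewrite size_take; case: ifP; lia.
have := congr1 (nth 0^~ (size v - 1)) e; have := congr1 (nth 0^~ (size v)) e.
rewrite !nth_cat st ltnn subnn; have -> : (size v < size v - 1) = false by lia.
have -> : size v - (size v - 1) = 1 by lia.
by move=> /= -> ->.
Qed.

Lemma uniq_E3 n v : uniq (E3 n v).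
Proof.
rewrite E3E map_inj_uniq ?uniq_letters_except // => a b.
by move/(congr1 (nth 0^~ (size (twist v)))); rewrite !(nth_cat_pair (twist v) _ _).1.
Qed.

Definition children n (v : seq nat) : seq (seq nat) := E1 n v ++ E2 n v ++ E3 n v.

Definition child_of n (v w : seq nat) : Prop :=
  [/\ size w = (size v).+2, {subset w <= letters n}, nonconst w & parent w = v].

(* A non-constant word over [n] has n + (n-1)^2 + (n-1) = n^2 distinct children;
   the three blocks are told apart by [kind]. *)
Lemma children_spec n (v : seq nat) : nonconst v -> {subset v <= letters n} ->
  [/\ uniq (children n v), size (children n v) = n ^ 2
    & forall w, w \in children n v -> child_of n v w].
Proof.
move=> ncv vn; have [/andP[l0 lv] _ _] := ellP ncv.
have v0 : 0 < size v by lia.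
have lastn : nth 0 v (size v - 1) \in letters n by apply/vn/mem_nth_word; lia.
have elln : nth 0 v (ell v - 1) \in letters n by apply/vn/mem_nth_word; lia.
have n0 : 0 < n by move: lastn; rewrite mem_letters; lia.
split.
- rewrite /children !cat_uniq uniq_E1 uniq_E2 // uniq_E3 /= andbT.
  apply/andP; split; [apply/hasPn => w | apply/hasPn => w /(E3_grown ncv vn) [[_ _ _ k2] _]].
    rewrite mem_cat => /orP[/(E2_grown v0 vn) | /(E3_grown ncv vn)] [[_ _ _ k] _];
      by apply/negP => /(E1_grown v0 vn) [_ _ _]; rewrite k.
  by apply/negP => /(E2_grown v0 vn) [[_ _ _]]; rewrite k2.
- rewrite /children !size_cat E3E !size_map size_allpairs /letters size_iota.
  by rewrite !size_letters_except //; nia.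
- move=> w; rewrite !mem_cat => /or3P[w1 | /(E2_grown v0 vn) [[? ? ? _] ?]
                                       | /(E3_grown ncv vn) [[? ? ? _] ?]] //.
  have [? ? ? _] := E1_grown v0 vn w1; split => //.
  by case/mapP: w1 => a _ ->; exact: nonconst_cat.
Qed.

Lemma uniq_cat_flatten (T S : eqType) (p : T -> S) (f : S -> seq T) (A : seq T) (s : seq S) :
  uniq A -> uniq s -> {in A, forall w, p w \notin s} -> {in s, forall v, uniq (f v)} ->
  {in s, forall v, {in f v, forall w, p w = v}} -> uniq (A ++ flatten (map f s)).
Proof.
move=> uA us pA uf pf; rewrite cat_uniq uA /=; apply/andP; split.
  apply/hasPn => w /flatten_mapP[v vs wf]; apply/negP => wA.
  by move: (pA w wA); rewrite (pf v vs w wf) vs.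
elim: s us uf pf {pA} => [|v s IH] //= /andP[vs us] uf pf.
have uf' : {in s, forall v, uniq (f v)} by move=> v' v's; apply: uf; rewrite in_cons v's orbT.
have pf' : {in s, forall v, {in f v, forall w, p w = v}}.
  by move=> v' v's; apply: pf; rewrite in_cons v's orbT.
rewrite cat_uniq uf ?mem_head // IH // andbT.
apply/hasPn => w /flatten_mapP[v' v's wf']; apply/negP => wf.
have pv : p w = v by apply: pf; rewrite ?mem_head.
have pv' : p w = v' by apply: pf; rewrite ?in_cons ?v's ?orbT.
by move: vs; rewrite -pv pv' v's.
Qed.

Lemma size_flatten_const (T : Type) (S : eqType) (f : S -> seq T) (s : seq S) k :
  {in s, forall v, size (f v) = k} -> size (flatten (map f s)) = k * size s.
Proof.
elim: s => [|v s IH] fk /=; first by rewrite muln0.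
by rewrite size_cat fk ?mem_head // IH ?mulnS // => v' v's; rewrite fk // in_cons v's orbT.
Qed.

Definition head_block n s : seq (seq nat) :=
  let c := nseq s.+1 1 in
  if odd s.+3 then E1 n c ++ E2 n c else [seq c ++ [:: a; 1] | a <- letters n].

Lemma D_recursion n s : D n s.+3 = head_block n s ++
  flatten [seq children n v | v <- [seq v <- D n s.+1 | v != nseq s.+1 1]].
Proof.
by rewrite [LHS]/D -/D /head_block; case: ifP; rewrite ?catA.
Qed.

(* What every word w of the head block is; its parent is either 1^(s+1) or has
   length s+2, so w is no child of a non-constant word of length s+1. *)
Definition head_word n s (w : seq nat) : Prop :=
  [/\ size w = s.+3, {subset w <= letters n}, w != nseq s.+3 1 -> nonconst w
    & parent w = nseq s.+1 1 \/ size (parent w) = s.+2].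

Lemma nseq_addn2 s : nseq s.+3 1 = nseq s.+1 1 ++ [:: 1; 1].
Proof. by rewrite -addn2 nseqD. Qed.

Lemma nth_nseq_cat s (u : seq nat) i : i < s -> nth 0 (nseq s 1 ++ u) i = 1.
Proof. by move=> i_s; rewrite nth_cat size_nseq i_s nth_nseq i_s. Qed.

Lemma head_E1 n s a : a \in letters n -> head_word n s (nseq s.+1 1 ++ [:: a; a]).
Proof.
move=> an; have n1 : 1 \in letters n by move: an; rewrite !mem_letters; lia.
have [pa _] := @parent_E1 (nseq s.+1 1) a isT; split; last by left.
- by rewrite size_cat size_nseq addn2.
- by move=> z; rewrite mem_cat mem_nseq !inE => /or3P[/andP[_ /eqP ->] | /eqP -> | /eqP ->].
- rewrite nseq_addn2 => ne; apply: (@nonconst_at _ s); first by rewrite size_cat size_nseq /=; lia.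
  have [w_k _] := nth_cat_pair (nseq s.+1 1) a a; rewrite size_nseq in w_k.
  rewrite w_k nth_nseq_cat // eq_sym.
  by apply: contra ne => /eqP ->.
Qed.

Lemma head_E2 n s w : 0 < n -> w \in E2 n (nseq s.+1 1) -> head_word n s w.
Proof.
move=> n0 wE2; have c0 : 0 < size (nseq s.+1 1) by rewrite size_nseq.
have cn : {subset nseq s.+1 1 <= letters n}.
  by move=> z; rewrite mem_nseq mem_letters => /andP[_ /eqP ->].
by have [[sw wn pw _] ncw] := E2_grown c0 cn wE2; split; rewrite ?sw ?size_nseq //; left.
Qed.

Lemma head_even n s a : a \in letters n -> head_word n s (nseq s.+1 1 ++ [:: a; 1]).
Proof.
move=> an; have n1 : 1 \in letters n by move: an; rewrite !mem_letters; lia.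
have sw : size (nseq s.+1 1 ++ [:: a; 1]) = s.+3 by rewrite size_cat size_nseq addn2.
have [-> | a1] := eqVneq a 1; first exact: head_E1.
have [w_k w_k1] := nth_cat_pair (nseq s.+1 1) a 1; rewrite size_nseq in w_k w_k1.
split => //.
- by move=> z; rewrite mem_cat mem_nseq !inE => /or3P[/andP[_ /eqP ->] | /eqP -> | /eqP ->].
- move=> _; apply: (@nonconst_at _ s.+1); first by rewrite sw.
  by rewrite w_k w_k1.
- by right; rewrite parent_cat_pair ?size_nseq // (negbTE a1) subn1 nth_nseq ltnSn eqxx size_twist_nseq.
Qed.

Lemma head_block_spec n s : 0 < n ->
  [/\ uniq (head_block n s),
      size (head_block n s) = (if odd s.+3 then n + (n - 1) * (n - 1) else n),
      nseq s.+3 1 \in head_block n s & {in head_block n s, forall w, head_word n s w}].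
Proof.
move=> n0; set c := nseq s.+1 1.
have c0 : 0 < size c by rewrite size_nseq.
have cn : {subset c <= letters n} by move=> z; rewrite mem_nseq mem_letters => /andP[_ /eqP ->].
have n1 : 1 \in letters n by rewrite mem_letters n0.
rewrite /head_block -/c nseq_addn2 -/c; case: ifP => _.
- have c_last : nth 0 c (size c - 1) = 1 by rewrite size_nseq subn1 nth_nseq ltnSn.
  split.
  + rewrite cat_uniq uniq_E1 uniq_E2 // andbT /=; apply/hasPn => w /(E2_grown c0 cn) [[_ _ _ k] _].
    by apply/negP => /(E1_grown c0 cn) [_ _ _]; rewrite k.
  + by rewrite size_cat size_map size_allpairs /letters size_iota c_last size_letters_except.
  + by rewrite mem_cat; apply/orP; left; apply/mapP; exists 1.
  + by move=> w; rewrite mem_cat => /orP[/mapP[a an ->] | /head_E2]; [exact: head_E1 | exact].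
- split.
  + rewrite map_inj_uniq ?uniq_letters // => a b.
    by move/(congr1 (nth 0^~ (size c))); rewrite !(nth_cat_pair c _ _).1.
  + by rewrite size_map /letters size_iota.
  + by apply/mapP; exists 1.
  + by move=> w /mapP[a an ->]; exact: head_even.
Qed.

Definition D_inv n t (L : seq (seq nat)) : Prop :=
  [/\ uniq L, {in L, forall w, size w = t}, {in L, forall w, {subset w <= letters n}},
      nseq t 1 \in L & {in L, forall w, w != nseq t 1 -> nonconst w}].

Lemma D_step n s : 0 < n -> D_inv n s.+1 (D n s.+1) ->
  D_inv n s.+3 (D n s.+3) /\
  size (D n s.+3) + n ^ 2 = size (head_block n s) + n ^ 2 * size (D n s.+1).
Proof.
move=> n0 [uD szD lettD cD ncD].
set c := nseq s.+1 1; set S := [seq v <- D n s.+1 | v != c].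
have [uH _ cH headH] := head_block_spec s n0.
have memS v : v \in S -> [/\ nonconst v, size v = s.+1 & {subset v <= letters n}].
  by rewrite mem_filter => /andP[vc vD]; split; [exact: ncD | exact: szD | exact: lettD].
have childS v : v \in S -> [/\ uniq (children n v), size (children n v) = n ^ 2
    & forall w, w \in children n v -> child_of n v w].
  by case/memS => ncv _ vn; exact: children_spec.
have memD w : w \in D n s.+3 -> head_word n s w \/ exists2 v, v \in S & child_of n v w.
  rewrite D_recursion mem_cat => /orP[/headH | /flatten_mapP[v vS wv]]; first by left.
  by right; exists v => //; case: (childS v vS) => _ _; apply.
have sizeS : size S = (size (D n s.+1)).-1.
  by rewrite size_filter -(count_predC (pred1 c)) (count_uniq_mem _ uD) cD add1n.
split.
- split.
  + rewrite D_recursion; apply: (uniq_cat_flatten (p := parent)) => //.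
    * exact: filter_uniq uD.
    * move=> w /headH[_ _ _ [-> | sp]]; first by rewrite mem_filter eqxx.
      by apply/negP => /memS[_ + _]; rewrite sp; lia.
    * by move=> v /childS[].
    * by move=> v /childS[_ _ ch] w /ch[].
  + by move=> w /memD[[] | [v /memS[_ sv _] [] ]] //; rewrite sv.
  + by move=> w /memD[[] | [v _ []]].
  + by rewrite D_recursion mem_cat cH.
  + by move=> w /memD[[] | [v _ []]].
- rewrite D_recursion size_cat (@size_flatten_const _ _ _ _ (n ^ 2)); last first.
    by move=> v /childS[].
  by rewrite sizeS -addnA -mulnSr prednK //; case: (D n s.+1) cD.
Qed.

(* (n+1) |D_(n,t)| exceeds n^t by 1 for odd t and by n for even t. *)
Definition excess n t : nat := if odd t then 1 else n.

Lemma size_head_block n s : 0 < n ->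
  (n + 1) * size (head_block n s) + n ^ 2 * excess n s.+3 = n ^ 3 + n ^ 2 + excess n s.+3.
Proof.
move=> n0; have [_ -> _ _] := head_block_spec s n0.
by rewrite /excess; case: ifP => _; nia.
Qed.

(* The counting recursion: if Y = |D_t|, Y' = |D_(t+2)| and H is the head block size,
   the excess e of (n+1) Y over X = n^t is also the excess of (n+1) Y' over n^2 X. *)
Lemma excess_recurrence n X e Y Y' H :
  (n + 1) * Y = X + e -> Y' + n ^ 2 = H + n ^ 2 * Y ->
  (n + 1) * H + n ^ 2 * e = n ^ 3 + n ^ 2 + e -> (n + 1) * Y' = n ^ 2 * X + e.
Proof. move=> hY hY' hH; nia. Qed.

Lemma D1_spec n : 0 < n -> D_inv n 1 (D n 1) /\ (n + 1) * size (D n 1) = n ^ 1 + excess n 1.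
Proof.
move=> n0; split; last by rewrite muln1 expn1.
split => // [w | w | w]; rewrite inE => /eqP -> //.
by move=> z; rewrite inE => /eqP ->; rewrite mem_letters n0.
Qed.

Lemma D2_spec n : 0 < n -> D_inv n 2 (D n 2) /\ (n + 1) * size (D n 2) = n ^ 2 + excess n 2.
Proof.
move=> n0; split; last by rewrite size_map /letters size_iota /excess /=; nia.
have n1 : 1 \in letters n by rewrite mem_letters n0.
split => //.
- by rewrite map_inj_uniq ?uniq_letters // => a b [].
- by move=> w /mapP[a _ ->].
- by move=> w /mapP[a an ->] z; rewrite !inE => /orP[] /eqP ->.
- by apply/mapP; exists 1.
- move=> w /mapP[a _ ->] ne; apply: (@nonconst_at _ 0) => //=.
  by apply: contra ne => /eqP ->.
Qed.

Lemma D_spec n t : 0 < n -> 0 < t ->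
  D_inv n t (D n t) /\ (n + 1) * size (D n t) = n ^ t + excess n t.
Proof.
move=> n0; elim/ltn_ind: t => -[|[|[|s]]] // IH _; [exact: D1_spec | exact: D2_spec |].
have [invD sizeD] := IH s.+1 (ltnW (ltnSn _)) isT.
have [invD' sizeD'] := D_step n0 invD.
split => //; have -> : n ^ s.+3 = n ^ 2 * n ^ s.+1 by rewrite -expnD.
have sizeH := size_head_block s n0.
have e3 : excess n s.+3 = excess n s.+1 by rewrite /excess !oddS negbK.
rewrite e3 in sizeH *; exact: excess_recurrence sizeD sizeD' sizeH.
Qed.

Theorem lemma2p4 (n t : nat) :
  2 <= n -> 0 < t -> cardD n t = (n ^ t + n) %/ (n + 1).
Proof.
move=> n2 t0; have [[uD _ _ _ _] sizeD] := D_spec (ltnW n2) t0.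
have -> : n ^ t + n = size (D n t) * (n + 1) + (n - excess n t).
  by move: sizeD; rewrite /excess; case: ifP => _; lia.
rewrite /cardD undup_id // divnMDl ?addn1 // divn_small ?addn0 //.
by rewrite /excess; case: ifP; lia.
Qed.
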